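(* For all graphs $H$ and $\Gamma$, we have $$\mathrm{ex}(\Gamma,\mathcal{P}_H)\ \ge\ \frac{1}{2}\,e(\Gamma)\,\mathrm{ex}(\chi(\overline{\Gamma}),\mathcal{F}_H)\Big/\binom{\chi(\overline{\Gamma})}{2}.$$
   Context: $\mathcal{P}_H$ is the property of not containing $H$ as an induced subgraph; $\mathrm{ex}(\Gamma,\mathcal{P})$ is the maximum number of edges of a subgraph $G\subseteq\Gamma$ that belongs to $\mathcal{P}$. For a family $\mathcal{F}$ of graphs, $\mathrm{ex}(k,\mathcal{F})$ is the maximum number of edges in a $k$-vertex graph containing no member of $\mathcal{F}$ as a subgraph. For a vertex partition $V(H)=V_1\sqcup\dots\sqcup V_k$ into cliques of $H$, the clique quotient is the graph on $\{1,\dots,k\}$ in which $i\ne j$ are adjacent if some vertex of $V_i$ is adjacent to some vertex of $V_j$; $\mathcal{F}_H$ is the family of bipartite graphs that are clique quotients of $H$. $\overline{\Gamma}$ is the complement of $\Gamma$ and $\chi$ denotes chromatic number. *)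

From mathcomp Require Import all_boot all_order all_algebra.
Set Implicit Arguments. Unset Strict Implicit. Unset Printing Implicit Defensive.

Definition simple_graph (V : finType) (e : rel V) : bool :=
  [forall x, forall y, e x y == e y x] && [forall x, ~~ e x x].

Definition edges (V : finType) (e : rel V) : {set {set V}} :=
  [set [set x; y] | x in V, y in V & e x y].
Definition nedges (V : finType) (e : rel V) : nat := #|edges e|.

Definition graph_of (V : finType) (S : {set {set V}}) : rel V :=
  fun x y => (x != y) && ([set x; y] \in S).

Definition compl (V : finType) (e : rel V) : rel V :=
  fun x y => (x != y) && ~~ e x y.

Definition colourable (V : finType) (e : rel V) (k : nat) : bool :=
  [exists f : {ffun V -> 'I_k}, [forall x, forall y, e x y ==> (f x != f y)]].
Definition chi (V : finType) (e : rel V) : nat :=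
  \big[minn/#|V|]_(k < #|V|.+1 | colourable e k) k.

Definition contains_induced (W V : finType) (h : rel W) (g : rel V) : bool :=
  [exists f : {ffun W -> V},
     injectiveb f && [forall x, forall y, g (f x) (f y) == h x y]].

Definition contains_sub (W V : finType) (F : rel W) (g : rel V) : bool :=
  [exists f : {ffun W -> V},
     injectiveb f && [forall x, forall y, F x y ==> g (f x) (f y)]].

(* ex(Gamma, P_H): max number of edges of a spanning subgraph G of Gamma
   with no induced copy of H *)
Definition ex_ind (W V : finType) (h : rel W) (g : rel V) : nat :=
  \max_(S : {set {set V}} | (S \subset edges g) && ~~ contains_induced h (graph_of S))
     #|S|.

Definition clique_partition (W : finType) (h : rel W) (k : nat) (p : {ffun W -> 'I_k}) : bool :=
  [forall i : 'I_k, exists x, p x == i] &&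
  [forall x, forall y, ((x != y) && (p x == p y)) ==> h x y].

Definition quotient (W : finType) (h : rel W) (k : nat) (p : {ffun W -> 'I_k}) : rel 'I_k :=
  fun i j => (i != j) && [exists x, exists y, [&& p x == i, p y == j & h x y]].

Definition bipartite (V : finType) (e : rel V) : bool := colourable e 2.

(* g contains no member of F_H (the bipartite clique quotients of H) as a subgraph;
   a clique partition has at most |V(H)| parts *)
Definition FH_free (W V : finType) (h : rel W) (g : rel V) : bool :=
  ~~ [exists k : 'I_(#|W|.+1), exists p : {ffun W -> 'I_k},
        [&& clique_partition h p, bipartite (quotient h p)
          & contains_sub (quotient h p) g]].

Definition ex_fam (W : finType) (h : rel W) (n : nat) : nat :=
  \max_(S : {set {set 'I_n}} | [forall s in S, #|s| == 2] && FH_free h (graph_of S))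
     #|S|.

From mathcomp Require Import all_boot all_order all_algebra fingroup perm.
From mathcomp Require Import lra.
Import GRing.Theory Num.Theory.
Set Implicit Arguments. Unset Strict Implicit. Unset Printing Implicit Defensive.

(* Colour V(Gamma) properly for the complement of Gamma with k = chi colours, so
   that every colour class is a clique of Gamma, and fix an extremal F_H-free
   graph F on the k colours.  For a permutation t and a 2-colouring c of the
   colours, keep every edge of Gamma inside a class, and an edge between classes
   u and v iff c u != c v and {t u, t v} is an edge of F.  An induced copy of H
   in the kept graph has a clique partition (by colour class) whose quotient is
   bipartite (by c) and embeds in F (by t), so no such copy exists and the kept
   graph has at most ex(Gamma, P_H) edges.  Averaging over all (t, c), an edge
   between two classes is kept for a fraction e(F) / (2 C(k,2)) of the choices. *)

Lemma set2_eq (T : finType) (x y u v : T) :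
  [set x; y] = [set u; v] -> (x = u /\ y = v) \/ (x = v /\ y = u).
Proof.
move=> E.
have xE : x \in [set u; v] by rewrite -E set21.
have yE : y \in [set u; v] by rewrite -E set22.
have uE : u \in [set x; y] by rewrite E set21.
have vE : v \in [set x; y] by rewrite E set22.
by move: xE yE uE vE => /set2P[]-> /set2P[]-> /set2P[] ? /set2P[] ?; subst; auto.
Qed.

Section Graphs.

Variable V : finType.
Implicit Types (e g : rel V) (x y : V).

Lemma simple_graphP e : reflect (symmetric e /\ irreflexive e) (simple_graph e).
Proof.
apply: (iffP andP) => [[/forallP esym /forallP eirr]|[esym eirr]]; split.
- by move=> x y; apply/eqP; have /forallP := esym x; apply.
- by move=> x; apply/negbTE.
- by apply/forallP => x; apply/forallP => y; rewrite esym.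
- by apply/forallP => x; rewrite eirr.
Qed.

Lemma edgesP e s : reflect (exists x y, e x y /\ s = [set x; y]) (s \in edges e).
Proof.
apply: (iffP imset2P) => [[x y _]|[x [y [exy ->]]]]; last by exists x y; rewrite ?inE.
by rewrite inE => exy ->; exists x, y.
Qed.

Lemma mem_edges_sym e x y : symmetric e -> ([set x; y] \in edges e) = e x y.
Proof.
move=> esym; apply/edgesP/idP => [[u [v [euv /set2_eq[[-> ->]|[-> ->]]]]]|exy] //.
  by rewrite esym.
by exists x, y.
Qed.

Lemma edgesS e e' : subrel e e' -> edges e \subset edges e'.
Proof.
move=> ee'; apply/subsetP => _ /edgesP[x [y [/ee' exy ->]]].
by apply/edgesP; exists x, y.
Qed.

Lemma graph_of_edges e : symmetric e -> irreflexive e -> graph_of (edges e) =2 e.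
Proof.
move=> esym eirr x y; rewrite /graph_of mem_edges_sym //.
by case: eqVneq => [->|]; rewrite ?eirr.
Qed.

Lemma colourable_by e k (f : V -> 'I_k) :
  (forall x y, e x y -> f x != f y) -> colourable e k.
Proof.
move=> fe; apply/existsP; exists [ffun x => f x].
by apply/forallP => x; apply/forallP => y; apply/implyP; rewrite !ffunE; apply: fe.
Qed.

Lemma bipartite_by e (c : V -> bool) :
  (forall x y, e x y -> c x != c y) -> bipartite e.
Proof.
move=> ce; apply: (colourable_by (f := fun x => if c x then ord_max else ord0)).
by move=> x y /ce; case: (c x); case: (c y).
Qed.

Lemma colourable_chi e : irreflexive e -> colourable e (chi e).
Proof.
move=> eirr; apply: (big_ind (colourable e)) => [|a b ea eb|//].
- apply: (colourable_by (f := enum_rank)) => x y exy.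
  by rewrite (inj_eq enum_rank_inj); apply: contraTneq exy => ->; rewrite eirr.
- by rewrite /minn; case: ifP.
Qed.

Lemma colourable_compl_cliques g k :
  colourable (compl g) k -> exists f : V -> 'I_k, forall x y, x != y -> f x = f y -> g x y.
Proof.
case/existsP=> f /forallP fP; exists f => x y xy fxy; apply: contraTT isT => ngxy.
by have /forallP/(_ y) := fP x; rewrite /compl xy ngxy fxy eqxx.
Qed.

End Graphs.

Section Embeddings.

Variables (W V : finType).

Lemma contains_inducedP (h : rel W) (g : rel V) :
  reflect (exists2 f : W -> V, injective f & forall x y, g (f x) (f y) = h x y)
          (contains_induced h g).
Proof.
apply: (iffP existsP) => [[f /andP[/injectiveP finj /forallP fP]]|[f finj fP]].
  by exists f => // x y; apply/eqP; have /forallP := fP x; apply.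
exists [ffun x => f x]; apply/andP; split.
  by apply/injectiveP => x y; rewrite !ffunE => /finj.
by apply/forallP => x; apply/forallP => y; rewrite !ffunE fP.
Qed.

Lemma eq_contains_induced (h : rel W) (g g' : rel V) :
  g =2 g' -> contains_induced h g = contains_induced h g'.
Proof.
move=> gg'; apply: eq_existsb => f; congr (_ && _).
by apply: eq_forallb => x; apply: eq_forallb => y; rewrite gg'.
Qed.

Lemma contains_sub_by (F : rel W) (g : rel V) (f : W -> V) :
  injective f -> (forall x y, F x y -> g (f x) (f y)) -> contains_sub F g.
Proof.
move=> finj fP; apply/existsP; exists [ffun x => f x]; apply/andP; split.
  by apply/injectiveP => x y; rewrite !ffunE => /finj.
by apply/forallP => x; apply/forallP => y; apply/implyP; rewrite !ffunE; apply: fP.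
Qed.

End Embeddings.

Lemma image_factorization (W T : finType) (q : W -> T) :
  exists m (p : {ffun W -> 'I_m}) (r : 'I_m -> T),
    [/\ m <= #|W|, forall i, exists x, p x = i, injective r & forall x, r (p x) = q x].
Proof.
have qW x : q x \in q @: W by exact: imset_f.
exists #|q @: W|, [ffun x => enum_rank_in (qW x) (q x)], enum_val; split.
- exact: leq_imset_card.
- move=> i; have /imsetP[x _ qx] := enum_valP i.
  by exists x; rewrite ffunE; move: (qW x); rewrite -qx => qWi; exact: enum_valK_in.
- exact: enum_val_inj.
- by move=> x; rewrite ffunE enum_rankK_in.
Qed.

Section ClassRestriction.

Variables (V T : finType) (g : rel V) (f : V -> T).

Definition class_restrict (D : rel T) : rel V :=
  fun x y => g x y && ((f x == f y) || D (f x) (f y)).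

Lemma class_restrict_sym D : symmetric g -> symmetric D -> symmetric (class_restrict D).
Proof. by move=> gsym Dsym x y; rewrite /class_restrict gsym Dsym eq_sym. Qed.

Hypothesis classes_cliques : forall x y, x != y -> f x = f y -> g x y.

Lemma induced_class_restrict_quotient (W : finType) (h : rel W) D :
  contains_induced h (class_restrict D) ->
  exists m (p : {ffun W -> 'I_m}) (r : 'I_m -> T),
    [/\ m <= #|W|, clique_partition h p, injective r
      & forall i j, quotient h p i j -> D (r i) (r j)].
Proof.
case/contains_inducedP=> phi phi_inj hE.
have [m [p [r [mW p_onto r_inj rp]]]] := image_factorization (f \o phi).
have {}rp x : f (phi x) = r (p x) by rewrite rp.
exists m, p, r; split=> //.
- apply/andP; split; apply/forallP => x.
    by have [y <-] := p_onto x; apply/existsP; exists y.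
  apply/forallP => y; apply/implyP => /andP[xy /eqP pxy].
  have fxy : f (phi x) = f (phi y) by rewrite !rp pxy.
  by rewrite -hE /class_restrict classes_cliques ?(inj_eq phi_inj) ?fxy ?eqxx.
- move=> i j /andP[ij /existsP[x /existsP[y /and3P[/eqP pi /eqP pj hxy]]]].
  subst i j; move: hxy; rewrite -hE /class_restrict !rp => /andP[_].
  by rewrite (inj_eq r_inj) (negbTE ij).
Qed.

End ClassRestriction.

Definition cross (T : finType) (F : {set {set T}}) (t : {perm T}) (c : {ffun T -> bool}) :
  rel T := fun u v => (c u != c v) && (t @: [set u; v] \in F).

Lemma cross_sym (T : finType) (F : {set {set T}}) t c : symmetric (cross F t c).
Proof. by move=> u v; rewrite /cross eq_sym setUC. Qed.

Lemma class_restrict_cross_free (W V T : finType) (h : rel W) (g : rel V) (f : V -> T)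
    (F : {set {set T}}) t c :
  (forall x y, x != y -> f x = f y -> g x y) -> FH_free h (graph_of F) ->
  ~~ contains_induced h (class_restrict g f (cross F t c)).
Proof.
move=> cliques HF; apply/negP => /(induced_class_restrict_quotient cliques).
case=> m [p [r [mW p_part r_inj pr]]].
have tr_inj : injective (t \o r) by apply: inj_comp r_inj; exact: perm_inj.
case/negP: HF; apply/existsP; exists (Ordinal (mW : m < #|W|.+1)).
apply/existsP; exists p; rewrite p_part /=; apply/andP; split.
  by apply: (bipartite_by (c := c \o r)) => i j /pr /andP[].
apply: (contains_sub_by tr_inj) => i j /pr /andP[cij tF].
rewrite /graph_of (inj_eq tr_inj) -(inj_eq r_inj).
rewrite imsetU1 imset_set1 in tF; rewrite tF andbT.
by apply: contraNneq cij => ->.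
Qed.

Section Counting.

Variable T : finType.

Lemma card_separating_colourings (a b : T) : a != b ->
  2 * #|[set c : {ffun T -> bool} | c a != c b]| = 2 ^ #|T|.
Proof.
move=> ab; set S := [set c | _].
pose flip (c : {ffun T -> bool}) := [ffun i => if i == a then ~~ c a else c i].
have flipK : involutive flip.
  move=> c; apply/ffunP => i; rewrite !ffunE eqxx.
  by case: eqP => [->|]; rewrite ?negbK.
have flipS : ~: S = flip @: S.
  rewrite (can2_imset_pre _ flipK flipK); apply/setP => c.
  rewrite !inE !ffunE eqxx [b == a]eq_sym (negbTE ab).
  by case: (c a); case: (c b).
have := cardsC S; rewrite flipS (card_imset _ (inv_inj flipK)) card_ffun card_bool => <-.
by rewrite addnn -mul2n.
Qed.

Lemma perm_set2_trans (a b a' b' : T) : a != b -> a' != b' ->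
  exists u : {perm T}, u @: [set a; b] = [set a'; b'].
Proof.
move=> ab ab'; pose t1 := tperm a a'; pose t2 := tperm (t1 b) b'.
have t1b : t1 b != a' by rewrite -[a'](tpermL a) (inj_eq perm_inj) eq_sym.
exists (t1 * t2)%g; rewrite imsetU1 imset_set1 !permM tpermL /t2 tpermL.
by rewrite tpermD // eq_sym.
Qed.

Lemma card_perm_fibre_le (A B B' : {set T}) (u : {perm T}) : u @: B = B' ->
  #|[set t : {perm T} | t @: A == B]| <= #|[set t : {perm T} | t @: A == B']|.
Proof.
move=> uB; rewrite -(card_imset _ (mulIg u)); apply/subset_leq_card/subsetP => s.
case/imsetP=> t; rewrite !inE => /eqP tA ->.
by rewrite -uB -tA -imset_comp; apply/eqP/eq_imset => x; rewrite permM.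
Qed.

Lemma card_perm_fibre_set2 (A B : {set T}) : #|A| == 2 -> #|B| == 2 ->
  #|[set t : {perm T} | t @: A == B]| = #|[set t : {perm T} | t @: A == A]|.
Proof.
case/cards2P=> a [b [ab ->]] /cards2P[a' [b' [ab' ->]]].
have [u uB] := perm_set2_trans ab ab'; have [v vB] := perm_set2_trans ab' ab.
by apply/eqP; rewrite eqn_leq (card_perm_fibre_le _ vB) (card_perm_fibre_le _ uB).
Qed.

Lemma card_perm_preimset (A : {set T}) (F : {set {set T}}) :
  #|[set t : {perm T} | t @: A \in F]|
    = \sum_(B in F) #|[set t : {perm T} | t @: A == B]|.
Proof.
rewrite -sum1dep_card (partition_big (fun t : {perm T} => t @: A) (mem F)) //=.
apply: eq_bigr => B BF; rewrite -sum1dep_card; apply: eq_bigl => t.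
by case: eqP => [->|]; rewrite ?BF ?andbF.
Qed.

Lemma card_perm_set2_in (A : {set T}) (F : {set {set T}}) :
  #|A| == 2 -> {in F, forall B : {set T}, #|B| == 2} ->
  'C(#|T|, 2) * #|[set t : {perm T} | t @: A \in F]| = #|F| * #|{perm T}|.
Proof.
move=> A2 F2; set m := #|[set t : {perm T} | t @: A == A]|.
have preim (G : {set {set T}}) : {in G, forall B : {set T}, #|B| == 2} ->
    #|[set t : {perm T} | t @: A \in G]| = #|G| * m.
  move=> G2; rewrite card_perm_preimset -sum_nat_const.
  by apply: eq_bigr => B /G2 B2; rewrite card_perm_fibre_set2.
have all2 : #|{perm T}| = 'C(#|T|, 2) * m.
  rewrite -card_draws -preim => [|B]; last by rewrite inE.
  by apply: eq_card => t; rewrite !inE card_imset //; exact: perm_inj.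
by rewrite preim // all2 mulnCA.
Qed.

Lemma card_cross (F : {set {set T}}) (a b : T) :
  a != b -> {in F, forall B : {set T}, #|B| == 2} ->
  2 * 'C(#|T|, 2) * #|[set p : {perm T} * {ffun T -> bool} | cross F p.1 p.2 a b]|
    = #|F| * #|{: {perm T} * {ffun T -> bool}}|.
Proof.
move=> ab F2.
have -> : [set p : {perm T} * {ffun T -> bool} | cross F p.1 p.2 a b]
    = setX [set t : {perm T} | t @: [set a; b] \in F]
           [set c : {ffun T -> bool} | c a != c b].
  by apply/setP => -[t c]; rewrite !inE andbC.
rewrite card_prod card_ffun card_bool -(card_separating_colourings ab) mulnA cardsX.
by rewrite [2 * _]mulnC mulnACA card_perm_set2_in // cards2 ab.
Qed.

End Counting.

Lemma sum_card_preimset (I T : finType) (A : I -> {set T}) :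
  \sum_x #|[set i | x \in A i]| = \sum_i #|A i|.
Proof.
have card_sum (J : finType) (S : {set J}) : #|S| = \sum_j (j \in S : nat).
  by rewrite -sum1_card big_mkcond; apply: eq_bigr => j _; case: (j \in S).
rewrite (eq_bigr _ (fun x _ => card_sum _ _)) [RHS](eq_bigr _ (fun i _ => card_sum _ _)).
under eq_bigr do under eq_bigr do rewrite inE.
exact: exchange_big.
Qed.

Lemma averaging_bound (I T : finType) (A : I -> {set T}) (B : {set T}) n d M :
  0 < #|I| -> {in B, forall x, n * #|I| <= d * #|[set i | x \in A i]|} ->
  (forall i, #|A i| <= M) -> #|B| * n <= d * M.
Proof.
move=> I0 AB AM; rewrite -(leq_pmul2r I0) -mulnA -sum_nat_const.
apply: (@leq_trans (d * \sum_i #|A i|)).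
  rewrite -sum_card_preimset big_distrr /= [X in _ <= X](bigID (mem B)) /=.
  by apply: leq_trans (leq_addr _ _); apply: leq_sum.
rewrite -mulnA leq_mul2l (mulnC M) -sum_nat_const; apply/orP; right.
by apply: leq_sum => i _; apply: AM.
Qed.

Lemma nedges_mul_le_ex_ind (W V T : finType) (h : rel W) (g : rel V) (f : V -> T)
    (F : {set {set T}}) :
  simple_graph g -> (forall x y, x != y -> f x = f y -> g x y) ->
  {in F, forall B : {set T}, #|B| == 2} -> FH_free h (graph_of F) ->
  nedges g * #|F| <= 2 * 'C(#|T|, 2) * ex_ind h g.
Proof.
case/simple_graphP=> gsym girr cliques F2 HF.
pose kept (p : {perm T} * {ffun T -> bool}) := class_restrict g f (cross F p.1 p.2).
have kept_sym p : symmetric (kept p) := class_restrict_sym _ gsym (cross_sym _ _ _).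
have kept_irr p : irreflexive (kept p) by move=> x; rewrite /kept /class_restrict girr.
apply: (averaging_bound (A := fun p : {perm T} * {ffun T -> bool} => edges (kept p))).
- by apply/card_gt0P; exists (1%g, [ffun => true]).
- move=> _ /edgesP[x [y [gxy ->]]].
  under eq_finset => p do rewrite mem_edges_sym // /kept /class_restrict gxy /=.
  have [_|fxy] := eqVneq (f x) (f y).
    rewrite /= cardsT leq_mul2r; apply/orP; right.
    apply: leq_trans (leq_pmull _ (isT : 0 < 2)).
    by rewrite -card_draws; apply/subset_leq_card/subsetP => B /F2; rewrite inE.
  by rewrite /= card_cross.
- move=> p; apply: leq_bigmax_cond; rewrite edgesS => [|x y /andP[]//].
  rewrite (eq_contains_induced _ (graph_of_edges (kept_sym p) (kept_irr p))).
  exact: class_restrict_cross_free.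
Qed.

Lemma leq_mul_bigmax (I : finType) (P : pred I) (F : I -> nat) n m :
  (forall i, P i -> n * F i <= m) -> n * \max_(i | P i) F i <= m.
Proof.
move=> Fm; apply: (big_ind (fun x => n * x <= m)) => // [|a b]; first by rewrite muln0.
by rewrite maxnMr geq_max => -> ->.
Qed.

Local Open Scope ring_scope.

Theorem corollary2p4 (W : finType) (h : rel W) (V : finType) (g : rel V) :
  simple_graph h -> simple_graph g ->
  (1 / 2 : rat) * (nedges g)%:R * (ex_fam h (chi (compl g)))%:R
     / ('C(chi (compl g), 2))%:R
  <= (ex_ind h g)%:R.
Proof.
move=> _ g_simple.
have compl_irr : irreflexive (compl g) by move=> x; rewrite /compl eqxx.
have [f cliques] := colourable_compl_cliques (colourable_chi compl_irr).
set k := chi (compl g) in f cliques *.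
have key : (nedges g * ex_fam h k <= 2 * 'C(k, 2) * ex_ind h g)%N.
  apply: leq_mul_bigmax => F /andP[/forall_inP F2 HF].
  by have := nedges_mul_le_ex_ind g_simple cliques F2 HF; rewrite card_ord.
(* For k < 2 the left-hand side divides by 'C(k, 2) = 0, and x / 0 = 0 in rat. *)
have [->|C_gt0] := posnP 'C(k, 2); first by rewrite invr0 mulr0 ler0n.
by rewrite ler_pdivrMr ?ltr0n //; move: key; rewrite -(ler_nat rat) !natrM; lra.
Qed.
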